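(* Let $F$ be the free group on the totally ordered set $X=\{x_1<\dots<x_m\}$, and let $n\ge1$, $c\ge1$ with $c\ge n-1$. Let $Y$ be the set of all basic commutators on $X$ of weights $c+1,\dots,c+n$ and $Z=\{[b,a]: a,b\in Y,\ b>a\}$. Then $$\gamma_2(\gamma_{c+1}(F))=\langle Z\rangle\,[\gamma_{c+n+1}(F),\gamma_{c+1}(F)],$$ i.e. $\gamma_2(\gamma_{c+1}(F))\equiv\langle Z\rangle \pmod{[\gamma_{c+n+1}(F),\gamma_{c+1}(F)]}$.
   Context: $\gamma_k(F)$ is the $k$-th term of the lower central series of $F$, and $\gamma_2(H)=[H,H]$. Basic commutators on a totally ordered set $X$ of free generators are defined inductively with their weights $wt$: the elements of $X$ are the basic commutators of weight 1, ordered as in $X$. Assuming basic commutators of weight $<k$ have been defined and ordered, a commutator $[b,a]$ is a basic commutator of weight $k$ if $b,a$ are basic commutators with $wt(a)+wt(b)=k$, $b>a$, and, if $b=[b_1,b_2]$ (with $b_1,b_2$ basic), then $b_2\le a$. The ordering is then extended to weight $k$ so that all basic commutators of smaller weight precede those of weight $k$. The order on $Y$ is the one inherited from this ordering. *)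

(* Concrete model of the free group F on X = {x_0 < ... < x_(m-1)}
   (indexed by 'I_m): elements are freely reduced words over letters (i, inv). *)
From mathcomp Require Import all_boot.
Set Implicit Arguments. Unset Strict Implicit. Unset Printing Implicit Defensive.

Section FreeGroup.
Variable m : nat.

(* a letter (i, false) is x_i, (i, true) is x_i^-1 *)
Definition letter := ('I_m * bool)%type.
Definition cancels (a b : letter) : bool := (a.1 == b.1) && (a.2 != b.2).

Fixpoint reducedb (w : seq letter) : bool :=
  match w with
  | a :: ((b :: _) as w') => ~~ cancels a b && reducedb w'
  | _ => true
  end.

Definition cons_red (a : letter) (w : seq letter) : seq letter :=
  match w with
  | b :: w' => if cancels a b then w' else a :: w
  | [::] => [:: a]
  end.

Definition reduce (w : seq letter) : seq letter := foldr cons_red [::] w.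

Lemma cons_red_reduced a w : reducedb w -> reducedb (cons_red a w).
Proof.
case: w => [|b w] //= Hw; case: ifP => hab.
  by case: w Hw => [|c w] //= /andP[].
by rewrite /= hab.
Qed.

Lemma reduce_reduced w : reducedb (reduce w).
Proof. by elim: w => [|a w IH] //=; apply: cons_red_reduced. Qed.

Definition FG := {w : seq letter | reducedb w}.
Definition mkFG (w : seq letter) : FG := exist _ (reduce w) (reduce_reduced w).
Definition FG1 : FG := mkFG [::].
Definition FGmul (u v : FG) : FG := mkFG (sval u ++ sval v).
Definition FGinv (u : FG) : FG :=
  mkFG (map (fun a : letter => (a.1, ~~ a.2)) (rev (sval u))).
Definition FGgen (i : 'I_m) : FG := mkFG [:: (i, false)].
Definition FGcomm (u v : FG) : FG := FGmul (FGmul (FGinv u) (FGinv v)) (FGmul u v).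

Inductive gen (S : FG -> Prop) : FG -> Prop :=
  | gen_base x : S x -> gen S x
  | gen_one : gen S FG1
  | gen_mul x y : gen S x -> gen S y -> gen S (FGmul x y)
  | gen_inv x : gen S x -> gen S (FGinv x).

Definition commsub (H K : FG -> Prop) : FG -> Prop :=
  gen (fun g => exists h k, H h /\ K k /\ g = FGcomm h k).

(* lower central series: gamma_1 = F, gamma_(k+1) = [gamma_k, F]
   (gamma_0 is also set to F, unused) *)
Fixpoint lcs (k : nat) : FG -> Prop :=
  match k with
  | 0 => fun _ => True
  | k'.+1 => if k' is 0 then fun _ => True
             else commsub (lcs k') (fun _ => True)
  end.

Definition setmul (A B : FG -> Prop) : FG -> Prop :=
  fun g => exists a b, A a /\ B b /\ g = FGmul a b.

Inductive comm : Type := Leaf of 'I_m | Node of comm & comm.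

Fixpoint wt (u : comm) : nat :=
  match u with Leaf _ => 1 | Node b a => wt b + wt a end.

Fixpoint eval (u : comm) : FG :=
  match u with Leaf i => FGgen i | Node b a => FGcomm (eval b) (eval a) end.

(* [basic] is the set of basic commutators and [lt] a total order on them,
   as in the inductive definition (order within a given weight arbitrary). *)
Record basic_order (lt : comm -> comm -> Prop) (basic : comm -> Prop) : Prop := {
  bo_leaf : forall i, basic (Leaf i);
  bo_leaf_lt : forall i j : 'I_m, lt (Leaf i) (Leaf j) <-> (i < j)%N;
  bo_node : forall b a, basic (Node b a) <->
     [/\ basic b, basic a, lt a b &
        match b with Leaf _ => True | Node _ b2 => b2 = a \/ lt b2 a end];
  bo_irrefl : forall u, basic u -> ~ lt u u;
  bo_trans : forall u v w, basic u -> basic v -> basic w ->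
     lt u v -> lt v w -> lt u w;
  bo_total : forall u v, basic u -> basic v -> u = v \/ lt u v \/ lt v u;
  bo_weight : forall u v, basic u -> basic v -> (wt u < wt v)%N -> lt u v
}.

End FreeGroup.

From HB Require Import structures.
From mathcomp Require Import all_boot zify.
From Stdlib Require Import ClassicalEpsilon.

(* Modulo gamma_(k+1), gamma_k is generated by the basic commutators of weight k.
   This is Hall's collection process: for basic a < b with b = [b1, b2] and
   b2 > a, the Hall-Witt identity expresses [b, a] through [[b1, a], b2] and
   [[b2, a], b1], which are handled by induction on the weight and, for a fixed
   weight, downwards on a (there are finitely many basic commutators of bounded
   weight).  Iterating, gamma_(c+1) is generated by the basic commutators of
   weights c+1, ..., c+n together with gamma_(c+n+1).  The subgroup
   <Z>[gamma_(c+n+1), gamma_(c+1)] lies in gamma_(2c+2), which is contained in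
   gamma_(c+n+1) since n <= c + 1, so it is normalised by gamma_(c+1).  It
   contains the commutator of any two of the above generators of gamma_(c+1),
   hence all of [gamma_(c+1), gamma_(c+1)]. *)

Set Implicit Arguments. Unset Strict Implicit. Unset Printing Implicit Defensive.

Section FreeGroupLaws.
Variable m : nat.
Implicit Types (a b : letter m) (u v w t : seq (letter m)) (x y z : FG m).

Definition linv a : letter m := (a.1, ~~ a.2).

Lemma linvK : involutive linv.
Proof. by case=> i s; rewrite /linv negbK. Qed.

Lemma cancelsP a b : cancels a b -> b = linv a.
Proof. by case: a b => [i [] ] [j [] ]; rewrite /cancels /linv /= => /andP[/eqP->]. Qed.

Lemma cancels_linv a : cancels a (linv a).
Proof. by rewrite /cancels /= eqxx; case: a.2. Qed.

Lemma cons_redK a t : reducedb t -> cons_red a (cons_red (linv a) t) = t.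
Proof.
case: t => [|b t] /=; first by rewrite cancels_linv.
case: ifP => [/cancelsP | _] /=; last by rewrite cancels_linv.
rewrite linvK => -> {b}; case: t => [|c t] //= /andP[hac _].
by case: ifP => // /cancelsP ec; rewrite ec cancels_linv in hac.
Qed.

Lemma foldr_cons_red_reduced u t : reducedb t -> reducedb (foldr (@cons_red m) t u).
Proof. by move=> Ht; elim: u => //= a u; apply: cons_red_reduced. Qed.

Lemma foldr_cons_red t a w : reducedb t ->
  foldr (@cons_red m) t (cons_red a w) = cons_red a (foldr (@cons_red m) t w).
Proof.
move=> Ht; case: w => [|b w] //=; case: ifP => [/cancelsP -> | //].
by rewrite cons_redK //; apply: foldr_cons_red_reduced.
Qed.

Lemma foldr_reduce t u : reducedb t ->
  foldr (@cons_red m) t (reduce u) = foldr (@cons_red m) t u.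
Proof. by move=> Ht; elim: u => //= a u IH; rewrite foldr_cons_red // IH. Qed.

Lemma reduce_id w : reducedb w -> reduce w = w.
Proof.
elim: w => //= a w IH Hw.
rewrite IH; last by case: w Hw {IH} => // b w /andP[].
by case: w Hw {IH} => //= b w /andP[/negbTE->].
Qed.

Lemma reduce_cat u v : reduce (u ++ v) = foldr (@cons_red m) (reduce v) u.
Proof. exact: foldr_cat. Qed.

Lemma FGmulA : associative (@FGmul m).
Proof.
move=> [u Hu] [v Hv] [w Hw]; apply: val_inj => /=.
rewrite [RHS]reduce_cat foldr_reduce ?reduce_reduced //.
by rewrite [LHS]reduce_cat reduce_id ?reduce_reduced // foldr_cat reduce_cat.
Qed.

Lemma FG1mul : left_id (FG1 m) (@FGmul m).
Proof. by move=> [u Hu]; apply: val_inj; rewrite /= reduce_id. Qed.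

Lemma FGmul1 : right_id (FG1 m) (@FGmul m).
Proof. by move=> [u Hu]; apply: val_inj; rewrite /= cats0 reduce_id. Qed.

Lemma foldr_cons_red_rev u t : reducedb t ->
  foldr (@cons_red m) (foldr (@cons_red m) t u) (map linv (rev u)) = t.
Proof.
elim: u t => //= a u IH t Ht.
rewrite rev_cons map_rcons -cats1 foldr_cat /= -{2}[a]linvK cons_redK.
  exact: IH.
exact: foldr_cons_red_reduced.
Qed.

Lemma FGmulVg : left_inverse (FG1 m) (@FGinv m) (@FGmul m).
Proof.
move=> [u Hu]; apply: val_inj => /=.
rewrite reduce_cat (reduce_id Hu) foldr_reduce // -{1}(reduce_id Hu).
exact: foldr_cons_red_rev.
Qed.

Lemma FGmulgV : right_inverse (FG1 m) (@FGinv m) (@FGmul m).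
Proof.
move=> x; rewrite -[LHS]FG1mul -(FGmulVg (FGinv x)) -FGmulA.
by rewrite [FGmul (FGinv x) _]FGmulA FGmulVg FG1mul FGmulVg.
Qed.

End FreeGroupLaws.

HB.instance Definition _ (m : nat) := Choice.on (FG m).
HB.instance Definition _ (m : nat) :=
  isGroup.Build (FG m) (@FGmulA m) (@FG1mul m) (@FGmul1 m) (@FGmulVg m) (@FGmulgV m).

Local Open Scope group_scope.

Section SubgroupPredicates.
Variable G : groupType.
Implicit Types (x y z : G) (P H K S T : G -> Prop).

Record is_subgroup P : Prop := IsSubgroup {
  subgroup1 : P 1;
  subgroupM : forall x y, P x -> P y -> P (x * y);
  subgroupV : forall x, P x -> P x^-1
}.

Definition normalised_by H P := forall x h, H h -> P x -> P (x ^ h).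
Definition normal P := forall x g, P x -> P (x ^ g).

Lemma normal_normalised H P : normal P -> normalised_by H P.
Proof. by move=> nP x h _; apply: nP. Qed.

Ltac gexpand := rewrite /commg /conjg ?invgM ?invgK ?mulgA;
  repeat rewrite ?mulgK ?mulgVK ?mulVg ?mulgV ?mul1g ?mulg1.

Lemma commMgJ x y z : [~ x * y, z] = [~ x, z] ^ y * [~ y, z].
Proof. by gexpand. Qed.

Lemma commgMJ x y z : [~ x, y * z] = [~ x, z] * [~ x, y] ^ z.
Proof. by gexpand. Qed.

Lemma commVgJ x y : [~ x^-1, y] = [~ x, y]^-1 ^ x^-1.
Proof. by gexpand. Qed.

Lemma commgVJ x y : [~ x, y^-1] = [~ x, y]^-1 ^ y^-1.
Proof. by gexpand. Qed.

Lemma hall_witt_identity x y z :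
  [~ x, y^-1, z] ^ y * [~ y, z^-1, x] ^ z * [~ z, x^-1, y] ^ x = 1.
Proof. by gexpand. Qed.

Lemma conjg_mulR x y : x ^ y = x * [~ x, y].
Proof. by rewrite commgEl mulVKg. Qed.

Lemma subgroup_commgC P x y : is_subgroup P -> P [~ x, y] -> P [~ y, x].
Proof. by move=> sP /(subgroupV sP); rewrite invgR. Qed.

Section NormalSubgroup.
Variable P : G -> Prop.
Hypotheses (sP : is_subgroup P) (nP : normal P).

Lemma normal_commVg x y : P [~ x, y] -> P [~ x^-1, y].
Proof. by rewrite commVgJ => /(subgroupV sP) /nP. Qed.

Lemma normal_commgV x y : P [~ x, y] -> P [~ x, y^-1].
Proof. by rewrite commgVJ => /(subgroupV sP) /nP. Qed.

(* The three subgroup lemma in elementwise form. *)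
Lemma normal_hall_witt x y z :
  P [~ x, y^-1, z] -> P [~ z, x^-1, y] -> P [~ y, z^-1, x].
Proof.
move=> Pxyz Pzxy; have hw := hall_witt_identity x y z.
set A := _ ^ y in hw; set B := _ ^ z in hw; set C := _ ^ x in hw.
have eB : B = A^-1 * C^-1.
  by apply: (mulIg C); apply: (mulgI A); rewrite mulgA hw mulgVK mulgV.
rewrite -(conjgK z [~ y, z^-1, x]) -/B eB; apply: nP.
by apply: (subgroupM sP); apply: (subgroupV sP); apply: nP.
Qed.

End NormalSubgroup.

Section CommutatorClosure.
Variables H K : G -> Prop.
Hypotheses (sH : is_subgroup H) (sK : is_subgroup K) (nKH : normalised_by H K).

Lemma commg_subgroup_l T :
  is_subgroup (fun g => H g /\ forall t, T t -> K [~ g, t]).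
Proof.
split.
- by split=> [|t _]; [apply: (subgroup1 sH) | rewrite comm1g; apply: (subgroup1 sK)].
- move=> x y [Hx Kx] [Hy Ky]; split=> [|t Tt]; first exact: (subgroupM sH).
  by rewrite commMgJ; apply: (subgroupM sK); [apply: nKH; last apply: Kx | apply: Ky].
- move=> x [Hx Kx]; split=> [|t Tt]; first exact: (subgroupV sH).
  rewrite commVgJ; apply: nKH; first exact: (subgroupV sH).
  exact/(subgroupV sK)/Kx.
Qed.

Lemma commg_subgroup_r S :
  is_subgroup (fun g => H g /\ forall s, S s -> K [~ s, g]).
Proof.
split.
- by split=> [|s _]; [apply: (subgroup1 sH) | rewrite commg1; apply: (subgroup1 sK)].
- move=> x y [Hx Kx] [Hy Ky]; split=> [|s Ss]; first exact: (subgroupM sH).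
  by rewrite commgMJ; apply: (subgroupM sK); [apply: Ky | apply: nKH; last apply: Kx].
- move=> x [Hx Kx]; split=> [|s Ss]; first exact: (subgroupV sH).
  rewrite commgVJ; apply: nKH; first exact: (subgroupV sH).
  exact/(subgroupV sK)/Kx.
Qed.

End CommutatorClosure.

End SubgroupPredicates.

Lemma FGcommE m (x y : FG m) : FGcomm x y = [~ x, y].
Proof. by rewrite /commg /conjg mulgA. Qed.

Section GeneratedSubgroups.
Variable m : nat.
Local Notation FG := (FG m).
Implicit Types (x y g h : FG) (A B H K S T : FG -> Prop).

Lemma FGmulE x y : FGmul x y = x * y.
Proof. by []. Qed.

Lemma gen_ind S P : is_subgroup P -> (forall x, S x -> P x) -> forall x, gen S x -> P x.
Proof.
move=> [P1 PM PV] SP x; elim=> {x} [x /SP | | x y _ Px _ Py | x _ Px] //.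
- exact: PM.
- exact: PV.
Qed.

Lemma gen_is_subgroup S : is_subgroup (gen S).
Proof. split; [exact: gen_one | exact: gen_mul | exact: gen_inv]. Qed.

Lemma gen_sub S T : (forall x, S x -> gen T x) -> forall x, gen S x -> gen T x.
Proof. exact: gen_ind (gen_is_subgroup T). Qed.

Lemma gen_normal S : (forall x g, S x -> gen S (x ^ g)) -> normal (gen S).
Proof.
move=> nS x g; elim=> {x} [x /nS | | x y _ Hx _ Hy | x _ Hx] //.
- by rewrite conj1g; apply: gen_one.
- by rewrite conjMg; apply: gen_mul.
- by rewrite conjVg; apply: gen_inv.
Qed.

Lemma gen_commg S T H K :
  is_subgroup H -> is_subgroup K -> normalised_by H K ->
  (forall s, S s -> H s) -> (forall t, T t -> H t) ->
  (forall s t, S s -> T t -> K [~ s, t]) ->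
  forall g h, gen S g -> gen T h -> K [~ g, h].
Proof.
move=> sH sK nKH SH TH KST g h Sg Th.
suff [_ KgT] : H g /\ forall h, gen T h -> K [~ g, h] by apply: KgT.
apply: (gen_ind (commg_subgroup_l sH sK nKH (gen T))) Sg => s Ss.
split=> [|h' Th']; first exact: SH.
suff [_ KSh] : H h' /\ forall s, S s -> K [~ s, h'] by apply: KSh.
apply: (gen_ind (commg_subgroup_r sH sK nKH S)) Th' => t Tt.
by split=> [|s' Ss']; [apply: TH | apply: KST].
Qed.

Lemma gen_commg_normal S T K : is_subgroup K -> normal K ->
  (forall s t, S s -> T t -> K [~ s, t]) ->
  forall g h, gen S g -> gen T h -> K [~ g, h].
Proof.
move=> sK nK; apply: (gen_commg (H := fun _ => True)) => //.
exact: normal_normalised.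
Qed.

Lemma FGgen_gen x : gen (fun g => exists i, g = FGgen i) x.
Proof.
have -> : x = mkFG (sval x) by apply: val_inj; rewrite /= reduce_id //; case: x.
elim: (sval x) => [|[i s] w IH]; first exact: gen_one.
have -> : mkFG ((i, s) :: w) = mkFG [:: (i, s)] * mkFG w.
  by apply: val_inj; rewrite /= (reduce_id (reduce_reduced w)).
apply: gen_mul => //; case: s.
- have -> : mkFG [:: (i, true)] = (FGgen i)^-1 by apply: val_inj.
  by apply/gen_inv/gen_base; exists i.
- by apply: gen_base; exists i.
Qed.

Lemma commsub_commg A B x y : A x -> B y -> commsub A B [~ x, y].
Proof. by move=> Ax By; apply: gen_base; exists x, y; rewrite FGcommE. Qed.

Lemma commsub_sub A A' B B' : (forall x, A x -> A' x) -> (forall y, B y -> B' y) ->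
  forall g, commsub A B g -> commsub A' B' g.
Proof.
move=> AA BB; apply: gen_sub => _ [x [y [Ax [By ->]]]].
by rewrite FGcommE; apply: commsub_commg; [apply: AA | apply: BB].
Qed.

Lemma commsub_normal A B : normal A -> normal B -> normal (commsub A B).
Proof.
move=> nA nB; apply: gen_normal => _ g [x [y [Ax [By ->]]]].
by rewrite FGcommE conjRg; apply: commsub_commg; [apply: nA | apply: nB].
Qed.

Lemma setmul_subgroup A B : is_subgroup A -> is_subgroup B -> normal B ->
  is_subgroup (setmul A B).
Proof.
move=> sA sB nB; split.
- exists 1, 1; rewrite FGmulE mulg1.
  by split; [apply: (subgroup1 sA) | split; [apply: (subgroup1 sB) |]].
- move=> _ _ [a1 [b1 [Aa1 [Bb1 ->]]]] [a2 [b2 [Aa2 [Bb2 ->]]]].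
  exists (a1 * a2), (b1 ^ a2 * b2); split; first exact: (subgroupM sA).
  split; first by apply: (subgroupM sB) => //; apply: nB.
  by rewrite !FGmulE /conjg !mulgA mulgK.
- move=> _ [a [b [Aa [Bb ->]]]].
  exists a^-1, (b^-1 ^ a^-1); split; first exact: (subgroupV sA).
  split; first by apply/nB/(subgroupV sB).
  by rewrite !FGmulE /conjg invgK invgM !mulgA mulVg mul1g.
Qed.

End GeneratedSubgroups.

Section LowerCentralSeries.
Variable m : nat.
Local Notation FG := (FG m).
Local Notation lcs := (@lcs m).
Implicit Types (x y g h : FG).

Lemma lcs_subgroup k : is_subgroup (lcs k).
Proof. by case: k => [|[|k]]; [| |exact: gen_is_subgroup]. Qed.

Lemma lcs_normal k : normal (lcs k).
Proof. by elim: k => [|[|k] IH] //; apply: commsub_normal. Qed.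

Lemma lcs_commg k x y : 0 < k -> lcs k x -> lcs k.+1 [~ x, y].
Proof. by case: k => // k _ Lx; apply: commsub_commg. Qed.

Lemma lcs_decr k x : lcs k.+1 x -> lcs k x.
Proof.
case: k => [|k] //; apply: gen_ind; first exact: lcs_subgroup.
move=> _ [h [g [Lh [_ ->]]]]; rewrite FGcommE commgEl.
by apply: (subgroupM (lcs_subgroup _));
  [apply: (subgroupV (lcs_subgroup _)) | apply: lcs_normal].
Qed.

Lemma lcs_le i j x : i <= j -> lcs j x -> lcs i x.
Proof. by move=> /subnK <-; elim: (j - i) => //= d IH /lcs_decr. Qed.

Lemma lcs_commg_add i j x y : 0 < i -> lcs i x -> lcs j.+1 y -> lcs (i + j.+1) [~ x, y].
Proof.
elim: j i x y => [|j IH] i x y i_gt0 Lx; first by rewrite addn1 => _; apply: lcs_commg.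
move=> Ly; have sL := lcs_subgroup (i + j.+2); have nL := @lcs_normal (i + j.+2).
have LV k z : lcs k z -> lcs k z^-1 by apply: (subgroupV (lcs_subgroup k)).
apply: (gen_commg_normal sL nL) (gen_base (S := lcs i) Lx) Ly
  => // z _ Lz [u [v [Lu [_ ->]]]].
rewrite FGcommE -[v]invgK; apply: subgroup_commgC (normal_hall_witt sL nL _ _) => //.
- by rewrite addnS; apply: lcs_commg; [rewrite addn_gt0 i_gt0 | apply/IH/LV].
- rewrite -addSnnS; apply: IH => //; rewrite -invgR.
  by apply/LV/lcs_commg/LV.
Qed.

End LowerCentralSeries.

Lemma count_lt_In (T : Type) (p q : pred T) (s : seq T) x :
  subpred p q -> List.In x s -> q x -> ~~ p x -> count p s < count q s.
Proof.
move=> pq; elim: s => //= a s IH [<- qx px | xs qx px].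
  by rewrite qx (negbTE px) add0n add1n ltnS sub_count.
by rewrite -addnS leq_add ?IH //; case: (boolP (p a)) => [/pq -> | _].
Qed.

Lemma wf_finite_strict_order (T : Type) (R : T -> T -> Prop) (s : seq T) :
  (forall x y z, R x y -> R y z -> R x z) -> (forall x, ~ R x x) ->
  (forall x y, R x y -> List.In x s) -> well_founded R.
Proof.
move=> trR irrR Rs.
pose above y x := if excluded_middle_informative (R x y) then true else false.
have aboveP y x : reflect (R x y) (above y x).
  by rewrite /above; case: excluded_middle_informative => h; constructor.
apply: (Wf_nat.well_founded_lt_compat _ (fun y => count (above y) s)) => x y Rxy.
apply/ltP/(count_lt_In (x := x)).
- by move=> z /aboveP Rzx; apply/aboveP/(trR _ _ _ Rzx).
- exact: Rs Rxy.
- exact/aboveP.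
- exact/aboveP/irrR.
Qed.

Lemma mem_In (T : eqType) (x : T) (s : seq T) : x \in s -> List.In x s.
Proof. by elim: s => //= y s IH; rewrite in_cons => /orP[/eqP ->| /IH]; auto. Qed.

Section Commutators.
Variable m : nat.
Implicit Types a b u : comm m.

Lemma wt_gt0 u : 0 < wt u.
Proof. by elim: u => //= b _ a; rewrite addn_gt0 => ->; rewrite orbT. Qed.

Lemma eval_Node b a : eval (Node b a) = [~ eval b, eval a].
Proof. exact: FGcommE. Qed.

Lemma eval_lcs u : lcs (wt u) (eval u).
Proof.
elim: u => //= b IHb a; rewrite FGcommE; move: (wt_gt0 a).
by case: (wt a) => // j _; apply: lcs_commg_add (wt_gt0 b) IHb.
Qed.

Fixpoint comm_upto (k : nat) : seq (comm m) :=
  if k is k'.+1 then List.map (@Leaf m) (enum 'I_m) ++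
     List.flat_map (fun b => List.map (Node b) (comm_upto k')) (comm_upto k')
  else [::].

Lemma comm_upto_In k u : wt u <= k -> List.In u (comm_upto k).
Proof.
elim: k u => [|k IH] u wtu; first by rewrite leqNgt wt_gt0 in wtu.
case: u wtu => [i|b a] /= wtu; apply/List.in_app_iff.
  by left; apply/List.in_map/mem_In; rewrite mem_enum.
have := wt_gt0 a; have := wt_gt0 b => b_gt0 a_gt0.
right; apply/List.in_flat_map; exists b; split; last apply/List.in_map.
  by apply: IH; rewrite -ltnS (leq_trans _ wtu) // -addn1 leq_add2l.
by apply: IH; rewrite -ltnS (leq_trans _ wtu) // -add1n leq_add2r.
Qed.

End Commutators.

Section BasicCommutators.
Variables (m : nat) (lt : comm m -> comm m -> Prop) (basic : comm m -> Prop).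
Hypothesis bo : basic_order lt basic.
Local Notation FG := (FG m).
Local Notation lcs := (@lcs m).
Implicit Types (a b c d u v : comm m) (g h : FG).

Definition above k u v := [/\ basic u, basic v, lt v u & wt u < k].

Lemma above_wf k : well_founded (above k).
Proof.
apply: (wf_finite_strict_order (s := comm_upto m k)).
- move=> u v w [Bu Bv lvu wu] [_ Bw lwv _]; split => //.
  exact: (bo_trans bo Bw Bv Bu).
- by move=> u [Bu _ luu _]; apply: (bo_irrefl bo Bu).
- by move=> u v [_ _ _ wu]; apply/comm_upto_In/ltnW.
Qed.

Lemma basic_node_or_hall a b : basic a -> basic b -> lt a b ->
  basic (Node b a) \/ exists b1 b2, b = Node b1 b2 /\ lt a b2.
Proof.
move=> Ba Bb lab; case: b Bb lab => [i|b1 b2] Bb lab.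
  by left; apply/(bo_node bo).
have [Bb1 Bb2 _ _] := iffLR (bo_node bo _ _) Bb.
case: (bo_total bo Bb2 Ba) => [e2 | [l2a | la2]]; last by right; exists b1, b2.
- by left; apply/(bo_node bo); split => //; left.
- by left; apply/(bo_node bo); split => //; right.
Qed.

Definition basic_gen k N : FG -> Prop := gen (fun g =>
  (exists u, [/\ basic u, k <= wt u < N & g = eval u]) \/ lcs N g).

Lemma basic_gen_lcs k N g : lcs N g -> basic_gen k N g.
Proof. by move=> Lg; apply: gen_base; right. Qed.

Lemma basic_gen_eval k N u : basic u -> k <= wt u < N -> basic_gen k N (eval u).
Proof. by move=> Bu wu; apply: gen_base; left; exists u. Qed.

Lemma basic_gen_subgroup k N : is_subgroup (basic_gen k N).
Proof. exact: gen_is_subgroup. Qed.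

Lemma basic_gen_normal k : normal (basic_gen k k.+1).
Proof.
apply: gen_normal => x g [[u [Bu wu ->]] | Lx]; last exact/basic_gen_lcs/lcs_normal.
have <- : wt u = k by lia.
rewrite conjg_mulR; apply: (subgroupM (basic_gen_subgroup _ _)).
  by apply: basic_gen_eval; rewrite ?leqnn.
exact/basic_gen_lcs/lcs_commg/eval_lcs/wt_gt0.
Qed.

Local Notation Q k := (basic_gen k k.+1).

Lemma basic_gen_commg j d :
  (forall c, basic c -> wt c = j -> Q (j + wt d) [~ eval c, eval d]) ->
  forall g, Q j g -> Q (j + wt d) [~ g, eval d].
Proof.
move=> Qcd g Qg.
apply: (gen_commg_normal (basic_gen_subgroup _ _) (@basic_gen_normal _)) Qg
  (gen_base (erefl (eval d))) => // s t [[c [Bc wc ->]] | Ls] <-.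
  by apply: Qcd => //; lia.
apply: basic_gen_lcs; rewrite -addSn.
by move: (wt_gt0 d) (eval_lcs d); case: (wt d) => // i _; apply: lcs_commg_add.
Qed.

Lemma commg_basic_cases (P : FG -> Prop) u v : is_subgroup P -> basic u -> basic v ->
  (lt v u -> P [~ eval u, eval v]) -> (lt u v -> P [~ eval v, eval u]) ->
  P [~ eval u, eval v].
Proof.
move=> sP Bu Bv Puv Pvu; case: (bo_total bo Bu Bv) => [<- | [luv | lvu]].
- by rewrite commgg; apply: (subgroup1 sP).
- exact/(subgroup_commgC sP)/Pvu.
- exact: Puv.
Qed.

Lemma basic_commg k a b : basic a -> basic b -> lt a b -> wt a + wt b = k ->
  Q k [~ eval b, eval a].
Proof.
elim/ltn_ind: k a b => k IHk a.
have sQ := basic_gen_subgroup k k.+1; have nQ := @basic_gen_normal k.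
elim/(well_founded_ind (above_wf k)): a => a IHa b Ba Bb lab wab.
have Q_above c d : basic c -> basic d -> lt a c -> lt a d -> wt c + wt d = k ->
    Q k [~ eval c, eval d].
  move=> Bc Bd lac lad wcd; have := wt_gt0 c; have := wt_gt0 d => d_gt0 c_gt0.
  apply: commg_basic_cases => // [ldc | lcd].
  - by apply: (IHa d) => //; [split => //; lia | lia].
  - by apply: (IHa c) => //; split => //; lia.
have Q_hall j e : basic e -> lt a e -> wt a < j -> j + wt e = k ->
    forall g, Q j g -> Q k [~ g, eval e].
  move=> Be lae wj wk; rewrite -wk; apply: basic_gen_commg => c Bc wc.
  by rewrite wk; apply: Q_above; rewrite ?wc //; apply: (bo_weight bo Ba Bc); rewrite wc.
case: (basic_node_or_hall Ba Bb lab) => [Bba | [b1 [b2 [eb la2]]]].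
  by rewrite -eval_Node; apply: basic_gen_eval => //=; rewrite addnC wab leqnn ltnSn.
subst b; have [Bb1 Bb2 l21 _] := iffLR (bo_node bo _ _) Bb.
have la1 : lt a b1 := bo_trans bo Ba Bb2 Bb1 la2 l21.
rewrite /= in wab; have := wt_gt0 a; have := wt_gt0 b1; have := wt_gt0 b2 => ? ? ?.
have sQ1 := basic_gen_subgroup (wt a + wt b1) (wt a + wt b1).+1.
have nQ1 := @basic_gen_normal (wt a + wt b1).
have sQ2 := basic_gen_subgroup (wt a + wt b2) (wt a + wt b2).+1.
have nQ2 := @basic_gen_normal (wt a + wt b2).
rewrite eval_Node -[eval b2]invgK; apply: (normal_hall_witt sQ nQ (x := eval a)).
- apply/(normal_commgV sQ nQ)/(Q_hall (wt a + wt b1)) => //; try lia.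
  by apply/(normal_commgV sQ1 nQ1)/(subgroup_commgC sQ1)/IHk => //; lia.
- apply/(Q_hall (wt a + wt b2)) => //; try lia.
  by apply/(normal_commgV sQ2 nQ2)/(normal_commVg sQ2 nQ2)/IHk => //; lia.
Qed.

Lemma lcs_basic_gen_succ k g : 0 < k -> lcs k g -> Q k g.
Proof.
case: k => // k _; elim: k g => [|k IH] g.
  move=> _; apply: gen_sub (FGgen_gen g) => _ [i ->].
  exact: (basic_gen_eval (u := Leaf i) (bo_leaf bo i)).
apply: gen_ind; first exact: basic_gen_subgroup.
move=> _ [h [f [Lh [_ ->]]]]; rewrite FGcommE.
apply: (gen_commg_normal (basic_gen_subgroup _ _) (@basic_gen_normal _))
  (IH _ Lh) (FGgen_gen f).
move=> s t [[c [Bc wc ->]] | Ls] [i ->]; last exact/basic_gen_lcs/lcs_commg.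
have wc1 : wt c = k.+1 by lia.
apply: (commg_basic_cases (basic_gen_subgroup _ _) Bc (bo_leaf bo i)) => [lic | lci].
- by apply: basic_commg (bo_leaf bo i) _ _ _ => //; rewrite wc1 add1n.
- by apply: (basic_commg Bc (bo_leaf bo i)) => //; rewrite wc1 addn1.
Qed.

Lemma lcs_basic_gen k N g : 0 < k <= N -> lcs k g -> basic_gen k N g.
Proof.
case/andP=> k_gt0 /subnK <-; move: (N - k) => d.
elim: d k k_gt0 g => [|d IH] k k_gt0 g Lg.
  by apply: basic_gen_lcs.
apply: gen_sub (lcs_basic_gen_succ k_gt0 Lg) => x [[u [Bu wu ->]] | Lx].
  by apply: basic_gen_eval => //; lia.
rewrite addSnnS; apply: gen_sub (IH k.+1 isT _ Lx) => y [[u [Bu wu ->]] | Ly].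
  by apply: basic_gen_eval => //; lia.
exact: basic_gen_lcs.
Qed.

End BasicCommutators.

Section CommutatorSubgroupOfLowerCentralTerm.
Variables (m : nat) (lt : comm m -> comm m -> Prop) (basic : comm m -> Prop).
Hypothesis bo : basic_order lt basic.
Variables c n : nat.
Hypothesis n_le : n.-1 <= c.
Local Notation FG := (FG m).
Local Notation lcs := (@lcs m).
Local Notation N := (c + n).+1.
Implicit Types (u v : comm m) (g h : FG).

Definition Y u := basic u /\ c.+1 <= wt u <= c + n.
Definition Z g := exists u v, [/\ Y u, Y v, lt u v & g = FGcomm (eval v) (eval u)].
Definition Zmod := setmul (gen Z) (commsub (lcs N) (lcs c.+1)).

Lemma Y_lcs u : Y u -> lcs c.+1 (eval u).
Proof. by case=> _ /andP[wu _]; apply: lcs_le wu (eval_lcs u). Qed.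

Lemma lcs_N_lcs g : lcs N g -> lcs c.+1 g.
Proof. by apply: lcs_le; rewrite ltnS leq_addr. Qed.

Lemma Zmod_subgroup : is_subgroup Zmod.
Proof.
apply: setmul_subgroup; [exact: gen_is_subgroup | exact: gen_is_subgroup |].
exact/commsub_normal/lcs_normal/lcs_normal.
Qed.

(* The only use of n <= c + 1: [gamma_(c+1), gamma_(c+1)] lies in gamma_N. *)
Lemma Zmod_lcs g : Zmod g -> lcs N g.
Proof.
have sL := lcs_subgroup m N.
have L2 x y : lcs c.+1 x -> lcs c.+1 y -> lcs N [~ x, y].
  move=> Lx Ly; apply: lcs_le (lcs_commg_add _ Lx Ly) => //; lia.
move=> [z [y [Zz [My ->]]]]; rewrite FGmulE; apply: (subgroupM sL).
  apply: gen_ind Zz => // _ [u [v [Yu Yv _ ->]]].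
  by rewrite FGcommE; apply: L2; apply: Y_lcs.
apply: gen_ind My => // _ [x [h [Lx [Lh ->]]]].
by rewrite FGcommE; apply: L2 => //; apply: lcs_N_lcs.
Qed.

Lemma Zmod_normalised : normalised_by (lcs c.+1) Zmod.
Proof.
move=> x h Lh Kx; rewrite conjg_mulR; apply: (subgroupM Zmod_subgroup) => //.
exists 1, [~ x, h]; rewrite FGmulE mul1g; split; first exact: gen_one.
by split => //; apply: commsub_commg => //; apply: Zmod_lcs.
Qed.

Lemma commsub_lcs_Zmod g : commsub (lcs c.+1) (lcs c.+1) g -> Zmod g.
Proof.
have sK := Zmod_subgroup.
have Zmod_M x : commsub (lcs N) (lcs c.+1) x -> Zmod x.
  by move=> Mx; exists 1, x; rewrite FGmulE mul1g; split => //; apply: gen_one.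
have Zmod_Z u v : Y u -> Y v -> lt u v -> Zmod [~ eval v, eval u].
  move=> Yu Yv luv; exists [~ eval v, eval u], 1; rewrite FGmulE mulg1.
  split; last by split => //; apply: gen_one.
  by apply: gen_base; exists u, v; rewrite FGcommE.
have lcs_gen x : lcs c.+1 x -> basic_gen basic c.+1 N x.
  by apply: (lcs_basic_gen bo); lia.
have Y_wt u : basic u -> c.+1 <= wt u < N -> Y u.
  by move=> Bu wu; split => //; rewrite -ltnS.
have gens_lcs x : (exists u, [/\ basic u, c.+1 <= wt u < N & x = eval u]) \/ lcs N x ->
    lcs c.+1 x.
  by case=> [[u [Bu wu ->]] | Lx]; [apply/Y_lcs/Y_wt | apply: lcs_N_lcs].
apply: gen_ind => // _ [x [y [Lx [Ly ->]]]]; rewrite FGcommE.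
apply: (gen_commg (lcs_subgroup m _) sK Zmod_normalised gens_lcs gens_lcs _
  (lcs_gen _ Lx) (lcs_gen _ Ly)).
move=> s t [[u [Bu wu ->]] | Ls] [[v [Bv wv ->]] | Lt].
- apply: (commg_basic_cases bo sK Bu Bv) => ?; apply: Zmod_Z => //; exact: Y_wt.
- by apply/(subgroup_commgC sK)/Zmod_M/commsub_commg => //; apply/Y_lcs/Y_wt.
- by apply/Zmod_M/commsub_commg => //; apply: gens_lcs; left; exists v.
- by apply/Zmod_M/commsub_commg => //; apply: lcs_N_lcs.
Qed.

Lemma Zmod_commsub_lcs g : Zmod g -> commsub (lcs c.+1) (lcs c.+1) g.
Proof.
move=> [z [y [Zz [My ->]]]]; rewrite FGmulE; apply: gen_mul.
  apply: gen_sub Zz => _ [u [v [Yu Yv _ ->]]].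
  by rewrite FGcommE; apply: commsub_commg; apply: Y_lcs.
by apply: commsub_sub My => //; apply: lcs_N_lcs.
Qed.

End CommutatorSubgroupOfLowerCentralTerm.

Theorem lemma2p3 (m n c : nat) (lt : comm m -> comm m -> Prop) (basic : comm m -> Prop) :
  (1 <= n)%N -> (1 <= c)%N -> (n.-1 <= c)%N -> basic_order lt basic ->
  let Y := fun u : comm m => basic u /\ (c.+1 <= wt u <= c + n)%N in
  let Z := fun g : FG m => exists a b : comm m,
             [/\ Y a, Y b, lt a b & g = FGcomm (eval b) (eval a)] in
  forall g : FG m,
    commsub (@lcs m c.+1) (@lcs m c.+1) g <->
    setmul (gen Z) (commsub (@lcs m (c + n).+1) (@lcs m c.+1)) g.
Proof.
move=> _ _ n_le bo Y Z g; split.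
- exact: commsub_lcs_Zmod.
- exact: Zmod_commsub_lcs.
Qed.
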